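(* Fix $x\in\mathbb X$ and $\Lambda\Subset\mathbb X\setminus\{x\}$, a total order $\preceq$ on $\mathbf F(x)$, and a set $\mathbf E\subset\mathbf F(x)$ with $\mathbf E\supset\{X\in\mathbf F(x)\mid W(X)\neq1,\ X\setminus\{x\}\subset\Lambda\}$. Suppose that $Z(\Lambda)\neq0$ and, unless $z(x)W(x)=0$, assume also $Z_X(\Lambda)\neq0$ for all $X\in\mathbf E$. Then \[ \widehat z(x,\Lambda)=z(x)\prod_{X\in\mathbf F(x):\,X'\subset\Lambda}\big(1+(W(X)-1)R_X(X',\Lambda)\big). \]
   Context: $\mathbb X$ is a finite or countably infinite set, $X\Subset\mathbb X$ means finite subset, $\mathbf F$ is the set of finite subsets of $\mathbb X$. Fix $z:\mathbb X\to\mathbb C$, $W:\mathbf F\to\mathbb C$; $f^X=\prod_{y\in X}f(y)$, $W(x)=W(\{x\})$; singletons $\{x\}$ are written $x$ inside arguments. For an interaction $V:\mathbf F\to\mathbb C$, the conditional interaction is $V(X\mid B)=\prod_{C\subset B}V(X\cup C)$ if $X\cap B=\varnothing$, $V(X\mid B)=0$ if $X=\{y\}$ with $y\in B$, and $V(X\mid B)=1$ otherwise; the Boltzmann factor is $\kappa(X\mid B)=\prod_{\varnothing\neq S\subset X}V(S\mid B)$; partition functions are $Z(X,\Lambda\mid B)=\sum_{Y\subset\Lambda\setminus X}z^{X\cup Y}\kappa(X\cup Y\mid B)$, $Z(\Lambda\mid B)=Z(\varnothing,\Lambda\mid B)$, with $B$ omitted when $B=\varnothing$; correlations $R(X,\Lambda\mid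 B)=Z(X,\Lambda\mid B)/Z(\Lambda\mid B)$ when the denominator is nonzero, and effective activities $\widehat z(y,\Lambda\mid B)=R(\{y\},\Lambda\mid B)$ for $y\notin\Lambda$. Unadorned $\kappa,Z,R,\widehat z$ refer to $V=W$. Let $\mathbf F(x)=\{X\Subset\mathbb X\mid x\in X\}$ and $X'=X\setminus\{x\}$. Given the total order $\preceq$ on $\mathbf F(x)$ (strict part $\prec$) and $X\in\mathbf F(x)$, define $W_X:\mathbf F\to\mathbb C$ by $W_X(Y)=W(Y)W(\{x\}\cup Y)$ if $x\notin Y$ and $\{x\}\cup Y\prec X$; $W_X(Y)=1$ if $x\in Y$ and $Y\neq X$; $W_X(Y)=W(Y)$ otherwise. Quantities built from $V=W_X$ are written $\kappa_X,Z_X,R_X,\widehat z_X$. Convention: a product is set equal to $0$ if at least one factor is well defined and equals $0$, even if other factors are ill-defined. *)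

From mathcomp Require Import all_boot all_algebra finmap.
From mathcomp.real_closed Require Import complex.
From mathcomp Require Import Rstruct.

Set Implicit Arguments.
Unset Strict Implicit.
Unset Printing Implicit Defensive.

Import GRing.Theory.
Local Open Scope ring_scope.
Local Open Scope fset_scope.

Definition C : fieldType := (Rdefinitions.R)[i].

Section Cluster.
(* The ground set X is a countable type (finite or countably infinite);
   finite subsets X ⋐ 𝕏 are elements of {fset T}. *)
Variable T : countType.

Definition fpow (f : T -> C) (X : {fset T}) : C := \prod_(y <- X) f y.

Definition cond_int (V : {fset T} -> C) (B X : {fset T}) : C :=
  if X `&` B == fset0 then \prod_(D <- fpowerset B) V (X `|` D)
  else if [exists y : B, X == [fset val y]] then 0
  else 1.

Definition kappa (V : {fset T} -> C) (B X : {fset T}) : C :=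
  \prod_(S <- fpowerset X | S != fset0) cond_int V B S.

Definition Zpart (V : {fset T} -> C) (z : T -> C) (X L B : {fset T}) : C :=
  \sum_(Y <- fpowerset (L `\` X)) fpow z (X `|` Y) * kappa V B (X `|` Y).

Definition Zfun (V : {fset T} -> C) (z : T -> C) (L B : {fset T}) : C :=
  Zpart V z fset0 L B.

(* R(X, Λ | B) = Z(X, Λ | B) / Z(Λ | B)  (MathComp division: c / 0 = 0). *)
Definition Rcorr (V : {fset T} -> C) (z : T -> C) (X L B : {fset T}) : C :=
  Zpart V z X L B / Zfun V z L B.

Definition zhat (V : {fset T} -> C) (z : T -> C) (y : T) (L B : {fset T}) : C :=
  Rcorr V z [fset y] L B.

Definition total_order_on (P : {fset T} -> Prop) (le : rel {fset T}) : Prop :=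
  [/\ (forall X, P X -> le X X),
      (forall X Y, P X -> P Y -> le X Y -> le Y X -> X = Y),
      (forall X Y Z, P X -> P Y -> P Z -> le X Y -> le Y Z -> le X Z)
    & (forall X Y, P X -> P Y -> le X Y || le Y X)].

Definition strict (le : rel {fset T}) (X Y : {fset T}) : bool :=
  le X Y && (X != Y).

Definition Wmod (W : {fset T} -> C) (le : rel {fset T}) (x : T) (X : {fset T})
    (Y : {fset T}) : C :=
  if (x \notin Y) && strict le (x |` Y) X then W Y * W (x |` Y)
  else if (x \in Y) && (Y != X) then 1
  else W Y.

End Cluster.

(* Split off x: Z({x} ∪ Y) carries κ(Y) ∏_{S ⊂ Y} W({x} ∪ S), so Z(Λ) and
   Z({x}, Λ)/z(x) are the two extreme values of a partition function [Zpin Q] in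
   which x interacts only through the sets of Q ⊂ F(x).  Adding the sets
   X ∈ F(x), X' ⊂ Λ, to Q one at a time in ≼-order, the step from {Y ≺ X} to
   {Y ≼ X} multiplies [Zpin] by 1 + (W(X) - 1) R_X(X', Λ): with Q = {Y ≺ X},
   [Zpin] is Z_X(Λ) up to the factor W(x) (present iff {x} ≺ X), and the new
   factor W(X) enters exactly the terms with Y ⊃ X'.  The product telescopes.
   If z(x)W(x) = 0 the left-hand side vanishes; if moreover z(x) ≠ 0, then
   W(x) = 0 makes the last value of [Zpin] vanish, and as Z(Λ) ≠ 0 the partial
   product up to its first vanishing value is already 0, so the denominators
   Z_X(Λ) that may vanish do not matter. *)

From mathcomp Require Import all_boot all_algebra ring finmap.
From mathcomp.real_closed Require Import complex.
From mathcomp Require Import Rstruct.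
Set Implicit Arguments.
Unset Strict Implicit.
Unset Printing Implicit Defensive.

Import GRing.Theory.
Local Open Scope ring_scope.
Local Open Scope fset_scope.

Lemma prod_telescope (R : fieldType) (a f : nat -> R) n : a 0%N != 0 ->
  (forall i, (i < n)%N -> a i * f i = a i.+1) -> \prod_(0 <= i < n) f i = a n / a 0%N.
Proof.
move=> a0; elim: n => [|n IHn] step; first by rewrite big_geq ?divff.
rewrite big_nat_recr //= IHn => [|i /ltnW]; last exact: step.
by rewrite mulrAC step.
Qed.

Lemma prod_telescope_eq0 (R : idomainType) (a f : nat -> R) n :
    (forall i, (i < n)%N -> a i != 0 -> a i * f i = a i.+1) ->
  a 0%N != 0 -> a n = 0 -> \prod_(0 <= i < n) f i = 0.
Proof.
elim: n => [|n IHn] step a0; first by move/eqP; rewrite (negPf a0).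
move=> an1; rewrite big_nat_recr //=.
have [an|an] := eqVneq (a n) 0; first by rewrite IHn ?mul0r // => i /ltnW; apply: step.
have /eqP := step n (ltnSn n) an; rewrite an1 mulf_eq0 (negPf an) /= => /eqP ->.
by rewrite mulr0.
Qed.

Lemma mem_take_pairwise (T : eqType) (r : rel T) (x0 : T) s i y :
    uniq s -> pairwise r s -> {in s &, antisymmetric r} -> (i < size s)%N -> y \in s ->
  (y \in take i s) = r y (nth x0 s i) && (y != nth x0 s i).
Proof.
move=> us pws antis lti ys; set X := nth x0 s i.
have def_s : s = take i s ++ X :: drop i.+1 s by rewrite -drop_nth ?cat_take_drop.
move: us pws ys; rewrite {1 2 3}def_s cat_uniq pairwise_cat pairwise_cons /=.
case/and3P=> _ /norP[XnT _] /andP[XnD _] /and3P[/allrelP rTX _ /andP[/allP rXD _]].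
rewrite mem_cat inE => ys.
have [yT|yT] := boolP (y \in take i s).
  by rewrite rTX ?mem_head //=; apply/esym; apply: contraNneq XnT => <-.
move: ys; rewrite (negPf yT) /= => /orP[/eqP->|yD]; first by rewrite eqxx andbF.
apply/esym/negbTE/andP => -[ryX /negP]; apply; apply/eqP/antis.
- exact: mem_drop yD.
- by rewrite mem_nth.
- by rewrite ryX rXD.
Qed.

Section BigFpowerset.
Variables (R : Type) (idx : R) (op : Monoid.com_law idx) (K : choiceType).
Implicit Types (A L Y : {fset K}) (F : {fset K} -> R).

Lemma big_fpowerset_fset0 (P : pred {fset K}) F Y :
  \big[op/idx]_(S <- fpowerset Y | P S) F S =
  op (if P fset0 then F fset0 else idx)
     (\big[op/idx]_(S <- fpowerset Y | (S != fset0) && P S) F S).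
Proof.
by rewrite big_mkcond (bigD1_seq fset0) ?fpowersetE ?fsub0set ?fset_uniq //= -big_mkcondr.
Qed.

Lemma big_fpowerset_supset A L F : A `<=` L ->
  \big[op/idx]_(Y <- fpowerset L | A `<=` Y) F Y =
  \big[op/idx]_(Y <- fpowerset (L `\` A)) F (A `|` Y).
Proof.
move=> AL; rewrite big_fset_condE.
have -> : [fset Y in fpowerset L | A `<=` Y] = [fset A `|` Y | Y in fpowerset (L `\` A)].
  apply/fsetP => Y; rewrite !inE /= fpowersetE; apply/andP/imfsetP => /= [[YL AY]|[Y']].
    exists (Y `\` A); first by rewrite fpowersetE fsetSD.
    by rewrite fsetUDl fsetDv fsetD0; apply/esym/fsetUidPr.
  rewrite fpowersetCE => /andP[Y'L _] ->.
  by rewrite fsubsetUl fsubUset AL (fsubset_trans Y'L) ?fsubsetDl.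
rewrite big_imfset //= => Y1 Y2; rewrite !fpowersetCE => /andP[_ /fsetDidPl dY1].
case/andP=> _ /fsetDidPl dY2 eqAY.
by rewrite -dY1 -dY2 -[Y1 `\` A]fset0U -[Y2 `\` A]fset0U -(fsetDv A) -!fsetDUl eqAY.
Qed.

Lemma big_fpowerset_fsetU1 (x : K) Y F : x \notin Y ->
  \big[op/idx]_(S <- fpowerset (x |` Y)) F S =
  op (\big[op/idx]_(S <- fpowerset Y) F S) (\big[op/idx]_(S <- fpowerset Y) F (x |` S)).
Proof.
move=> xY; have xNS S : S `<=` Y -> x \notin S by move=> SY; apply: contra (fsubsetP SY x) xY.
rewrite (big_fsetID _ (fun S : {fset K} => x \notin S)); congr (op _ _).
  apply: eq_fbigl => S; rewrite !inE /= !fpowersetE.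
  apply/andP/idP => [[SxY xS]|SY]; last by rewrite xNS // (fsubset_trans SY) ?fsubsetU1.
  by rewrite -(fsetU1K xY) fsubsetD1 SxY.
have -> : [fset S in fpowerset (x |` Y) | ~~ (x \notin S)] = [fset x |` S | S in fpowerset Y].
  apply/fsetP => S; rewrite !inE /= negbK fpowersetE.
  apply/andP/imfsetP => /= [[SxY xS]|[S']].
    by exists (S `\ x); rewrite ?fsetD1K // fpowersetE fsubDset.
  by rewrite fpowersetE => S'Y ->; rewrite fset1U1 fsetUS.
rewrite big_imfset //= => S1 S2; rewrite !fpowersetE => S1Y S2Y eqS.
by rewrite -(fsetU1K (xNS _ S1Y)) eqS fsetU1K ?xNS.
Qed.
End BigFpowerset.

Section Cluster.
Variable T : countType.
Implicit Types (V : {fset T} -> C) (z : T -> C) (A L S X Y : {fset T}).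

Lemma kappa_fset0 V Y : kappa V fset0 Y = \prod_(S <- fpowerset Y | S != fset0) V S.
Proof.
by apply: eq_bigr => S _; rewrite /cond_int fsetI0 eqxx fpowerset0 big_seq_fset1 fsetU0.
Qed.

Lemma kappa_fsetU1 V (x : T) Y : x \notin Y ->
  kappa V fset0 (x |` Y) = kappa V fset0 Y * \prod_(S <- fpowerset Y) V (x |` S).
Proof.
move=> xY; rewrite !kappa_fset0 big_mkcond big_fpowerset_fsetU1 // -big_mkcond.
by congr (_ * _); apply: eq_bigr => S _; case: fset0Pn => // -[]; exists x; rewrite fset1U1.
Qed.

Lemma Zpart_fset0 V z A L : A `<=` L ->
  Zpart V z A L fset0 = \sum_(Y <- fpowerset L | A `<=` Y) fpow z Y * kappa V fset0 Y.
Proof. by move=> AL; rewrite big_fpowerset_supset. Qed.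

Section PinnedPartitionFunction.
Variables (z : T -> C) (W : {fset T} -> C) (x : T) (L : {fset T}).
Hypothesis xL : x \notin L.

(* Z(A, Λ) with x added without its activity and interacting only through the
   factors W({x} ∪ S) with {x} ∪ S in Q. *)
Definition Zpin A (Q : pred {fset T}) : C :=
  \sum_(Y <- fpowerset L | A `<=` Y)
     fpow z Y * kappa W fset0 Y * \prod_(S <- fpowerset Y | Q (x |` S)) W (x |` S).

Lemma notin_fsubset Y : Y `<=` L -> x \notin Y.
Proof. by move=> YL; apply: contra (fsubsetP YL x) xL. Qed.

Lemma Zpin_ext A (Q1 Q2 : pred {fset T}) :
  (forall S, S `<=` L -> Q1 (x |` S) = Q2 (x |` S)) -> Zpin A Q1 = Zpin A Q2.
Proof.
move=> eqQ; apply: eq_fbigr => Y; rewrite fpowersetE => YL _; congr (_ * _).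
apply: eq_fbigl_cond => S; rewrite !inE /= fpowersetE.
by case SY: (S `<=` Y); rewrite //= eqQ // (fsubset_trans SY).
Qed.

Lemma Zpin_pred0 : Zpin fset0 xpred0 = Zfun W z L fset0.
Proof.
by rewrite /Zfun Zpart_fset0 ?fsub0set //; apply: eq_bigr => Y _; rewrite big_pred0_eq mulr1.
Qed.

Lemma Zpin_predT : z x * Zpin fset0 xpredT = Zpart W z [fset x] L fset0.
Proof.
rewrite /Zpart (mem_fsetD1 xL) mulr_sumr (eq_bigl xpredT) => [|Y]; last exact: fsub0set.
apply: eq_big_seq => Y; rewrite fpowersetE => /notin_fsubset xY.
by rewrite /fpow big_fsetU1 // kappa_fsetU1 // !mulrA.
Qed.

Lemma Zpin_eq0 A (Q : pred {fset T}) : W [fset x] = 0 -> Q [fset x] -> Zpin A Q = 0.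
Proof.
move=> Wx0 Qx; apply: big1 => Y _.
by rewrite big_fpowerset_fset0 /= fsetU0 Qx Wx0 mul0r mulr0.
Qed.

Lemma fsetU1_eq X S : x \in X -> x \notin S -> (x |` S == X) = (S == X `\ x).
Proof.
by move=> xX xS; apply/eqP/eqP => [<-|->]; rewrite ?fsetU1K ?fsetD1K.
Qed.

Lemma prod_fpowerset_fsetU1_eq X Y : x \in X -> x \notin Y ->
  \prod_(S <- fpowerset Y | x |` S == X) W (x |` S) = if X `\ x `<=` Y then W X else 1.
Proof.
move=> xX xY; rewrite big_fset_condE.
rewrite (_ : [fset S in _ | _] = if X `\ x `<=` Y then [fset X `\ x] else fset0).
  by case: ifP; rewrite ?big_seq_fset1 ?big_seq_fset0 ?fsetD1K.
apply/fsetP => S; rewrite !inE /= fpowersetE; apply/andP/idP => [[SY]|].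
  by rewrite fsetU1_eq ?(contra (fsubsetP SY x)) // => /eqP SX; rewrite -SX SY inE.
by case: ifP; rewrite ?inE // => X'Y /eqP ->; rewrite X'Y fsetD1K.
Qed.

Lemma prod_fpowerset_predU1 X (Q : pred {fset T}) Y : x \in X -> ~~ Q X -> x \notin Y ->
  \prod_(S <- fpowerset Y | (x |` S == X) || Q (x |` S)) W (x |` S) =
  (if X `\ x `<=` Y then W X else 1) * \prod_(S <- fpowerset Y | Q (x |` S)) W (x |` S).
Proof.
move=> xX nQX xY; rewrite (bigID (fun S => x |` S == X)) -prod_fpowerset_fsetU1_eq //.
by congr (_ * _); apply: eq_bigl => S; case: eqP => [->|_]; rewrite ?(negPf nQX) ?andbT ?andbF.
Qed.

Lemma Zpin_predU1 X (Q : pred {fset T}) : x \in X -> ~~ Q X ->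
  Zpin fset0 (fun S => (S == X) || Q S) = (Zpin fset0 Q + (W X - 1) * Zpin (X `\ x) Q)%R.
Proof.
move=> xX nQX; rewrite /Zpin mulr_sumr !(big_mkcond (fun Y => _ `<=` Y)) -big_split.
apply: eq_big_seq => Y; rewrite fpowersetE fsub0set => /notin_fsubset xY.
rewrite /= prod_fpowerset_predU1 //; case: ifP => _; last by rewrite mul1r addr0.
by ring.
Qed.

Lemma kappa_Wmod le X Y : x \notin Y ->
  kappa (Wmod W le x X) fset0 Y =
  kappa W fset0 Y * \prod_(S <- fpowerset Y | (S != fset0) && strict le (x |` S) X) W (x |` S).
Proof.
move=> xY; rewrite !kappa_fset0 big_mkcondr -big_split; apply: eq_fbigr => S.
rewrite fpowersetE => SY _; have xS : x \notin S by apply: contra (fsubsetP SY x) xY.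
by rewrite /= /Wmod xS (negPf xS); case: strict; rewrite ?mulr1.
Qed.

Lemma Zpin_Wmod le X A : A `<=` L ->
  Zpin A (fun S => strict le S X) =
  (if strict le [fset x] X then W [fset x] else 1) * Zpart (Wmod W le x X) z A L fset0.
Proof.
move=> AL; rewrite Zpart_fset0 // mulr_sumr; apply: eq_fbigr => Y.
rewrite fpowersetE => /notin_fsubset xY _.
by rewrite kappa_Wmod // (big_fpowerset_fset0 _ (fun S => strict le (x |` S) X)) fsetU0 /=; ring.
Qed.

Lemma Zfun_Wmod_neq0 le X :
  Zpin fset0 (fun S => strict le S X) != 0 -> Zfun (Wmod W le x X) z L fset0 != 0.
Proof. by rewrite Zpin_Wmod ?fsub0set // mulf_eq0 negb_or => /andP[]. Qed.

Lemma Zpin_strict_step le X : x \in X -> X `\ x `<=` L ->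
    Zfun (Wmod W le x X) z L fset0 != 0 \/ W X = 1 ->
  Zpin fset0 (fun S => strict le S X) *
    (1 + (W X - 1) * Rcorr (Wmod W le x X) z (X `\ x) L fset0) =
  Zpin fset0 (fun S => (S == X) || strict le S X).
Proof.
move=> xX XL g_or_W; rewrite Zpin_predU1 /strict ?eqxx ?andbF // !Zpin_Wmod ?fsub0set // /Rcorr.
case: g_or_W => [g0|->]; last by rewrite subrr !mul0r !addr0 mulr1.
by rewrite /Zfun in g0 *; field.
Qed.

Section Chain.
Variable le : rel {fset T}.
Hypothesis le_order : total_order_on (fun X => x \in X) le.

Definition chain := sort le [seq X <- fpowerset (x |` L) | x \in X].

Lemma mem_chain X : (X \in chain) = (x \in X) && (X `\ x `<=` L).
Proof. by rewrite mem_sort mem_filter fpowersetE fsubDset. Qed.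

Lemma fsetU1_in_chain S : S `<=` L -> x |` S \in chain.
Proof. by move=> SL; rewrite mem_chain fset1U1 fsetU1K // notin_fsubset. Qed.

Lemma big_chain (F : {fset T} -> C) :
  \prod_(X <- fpowerset (x |` L) | x \in X) F X =
  \prod_(0 <= i < size chain) F (nth fset0 chain i).
Proof. by rewrite -big_filter -(perm_big _ (permEl (perm_sort le _))) (big_nth fset0). Qed.

Lemma mem_take_chain i Y : (i < size chain)%N -> Y \in chain ->
  (Y \in take i chain) = strict le Y (nth fset0 chain i).
Proof.
case: le_order => _ le_anti le_trans le_total.
have x_chain : all (fun X => x \in X) chain by apply/allP => X; rewrite mem_chain => /andP[].
have le_trans_in : {in (fun X => x \in X) & &, transitive le}.
  by move=> X1 X2 X3 x1 x2 x3; apply: le_trans.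
apply: mem_take_pairwise.
- by rewrite sort_uniq filter_uniq ?fset_uniq.
- rewrite -(sorted_pairwise_in le_trans_in x_chain).
  by apply: sort_sorted_in (filter_all _ _) => X1 X2; apply: le_total.
- by move=> X1 X2; rewrite !mem_chain => /andP[x1 _] /andP[x2 _] /andP[]; apply: le_anti.
Qed.

Lemma Zpin_take_chain A i : (i < size chain)%N ->
  Zpin A (fun S => S \in take i chain) = Zpin A (fun S => strict le S (nth fset0 chain i)).
Proof. by move=> lti; apply: Zpin_ext => S SL; rewrite mem_take_chain ?fsetU1_in_chain. Qed.

Lemma Zpin_take_chain_step i (X := nth fset0 chain i) : (i < size chain)%N ->
    Zfun (Wmod W le x X) z L fset0 != 0 \/ W X = 1 ->
  Zpin fset0 (fun S => S \in take i chain) *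
    (1 + (W X - 1) * Rcorr (Wmod W le x X) z (X `\ x) L fset0) =
  Zpin fset0 (fun S => S \in take i.+1 chain).
Proof.
move=> lti g_or_W; have /andP[xX XL] : (x \in X) && (X `\ x `<=` L) by rewrite -mem_chain mem_nth.
rewrite Zpin_take_chain // Zpin_strict_step // (take_nth fset0 lti).
by apply: Zpin_ext => S SL; rewrite mem_rcons inE mem_take_chain ?fsetU1_in_chain.
Qed.

End Chain.
End PinnedPartitionFunction.
End Cluster.

Theorem corollary4p3 (T : countType) (z : T -> C) (W : {fset T} -> C)
    (x : T) (L : {fset T}) (le : rel {fset T}) (E : {fset T} -> Prop) :
  x \notin L ->
  total_order_on (fun X => x \in X) le ->
  (forall X, E X -> x \in X) ->
  (forall X, x \in X -> W X != 1 -> X `\ x `<=` L -> E X) ->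
  Zfun W z L fset0 != 0 ->
  (z x * W [fset x] != 0 ->
     forall X, E X -> Zfun (Wmod W le x X) z L fset0 != 0) ->
  zhat W z x L fset0 =
    z x * \prod_(X <- fpowerset (x |` L) | x \in X)
            (1 + (W X - 1) * Rcorr (Wmod W le x X) z (X `\ x) L fset0).
Proof.
move=> xL le_order _ W1_E Z_neq0 Zmod_neq0.
set s := chain x L le; pose a i := Zpin z W x L fset0 (fun S => S \in take i s).
have a0 : a 0%N = Zfun W z L fset0.
  by rewrite -(Zpin_pred0 _ _ x); apply: Zpin_ext => S _; rewrite take0.
have a_size : a (size s) = Zpin z W x L fset0 xpredT.
  by rewrite /a take_size; apply: Zpin_ext => S SL; rewrite fsetU1_in_chain.
rewrite /zhat /Rcorr -(Zpin_predT z W xL) -a_size -a0 (big_chain _ _ le).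
have [zW0|zW_neq0] := eqVneq (z x * W [fset x]) 0.
  have [->|zx_neq0] := eqVneq (z x) 0; first by rewrite !mul0r.
  have Wx0 : W [fset x] = 0 by apply/eqP; move/eqP: zW0; rewrite mulf_eq0 (negPf zx_neq0).
  have an0 : a (size s) = 0 by rewrite a_size Zpin_eq0.
  rewrite an0 mulr0 mul0r (@prod_telescope_eq0 _ a) ?mulr0 ?a0 // => i lti ai_neq0.
  apply: Zpin_take_chain_step => //; left.
  by apply: (Zfun_Wmod_neq0 xL); rewrite -Zpin_take_chain.
rewrite (@prod_telescope _ a) ?a0 ?mulrA // => i lti.
apply: Zpin_take_chain_step => //; set X := nth fset0 s i.
have [WX1|WX_neq1] := eqVneq (W X) 1; [by right | left].
have /andP[xX XL] : (x \in X) && (X `\ x `<=` L) by rewrite -(mem_chain _ _ le) mem_nth.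
exact: Zmod_neq0 zW_neq0 _ (W1_E X xX WX_neq1 XL).
Qed.
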